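(* Fix $p\in[0,1]$ and a sequence $\{\gamma_n\}$ with $\gamma_n\in[0,\frac12]$, $\gamma_n/\sqrt{\log n/n}\to\infty$ and $\gamma_n\to0$. For each $n$ let $\mathcal G_n(p)$ be the set of all graphs $G=(\mathcal V,\mathcal E)$ with $n$ vertices such that (1) every vertex has degree between $pn(1-\gamma_n)$ and $pn(1+\gamma_n)$, and (2) for all $u,v\in\mathcal V$, $|\mathcal N(u)\cap\mathcal N(v)|/|\mathcal N(v)|\ge p(1-\gamma_n)$. Let $G$ be an Erdős–Rényi random graph with $n$ vertices and edge probability $p$. Then there is a sequence $\theta_n\to0$ such that for every $n$, $\mathbb P(G\in\mathcal G_n(p))\ge1-\theta_n$.
   Context: $\mathcal N(v)$ denotes the set of neighbors of $v$ in $G$. *)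

From HB Require Import structures.
From mathcomp Require Import all_boot all_order all_algebra.
From mathcomp Require Import all_classical all_reals all_analysis.
Set Implicit Arguments. Unset Strict Implicit. Unset Printing Implicit Defensive.
Import Order.TTheory GRing.Theory Num.Theory.
Local Open Scope ring_scope.

(* A simple graph on vertex set 'I_n is represented by its edge set:
   a set of 2-element subsets of 'I_n. *)
Definition two_sets (n : nat) : {set {set 'I_n}} := [set e : {set 'I_n} | #|e| == 2%N].

Definition is_graph (n : nat) (E : {set {set 'I_n}}) : bool := E \subset two_sets n.

Definition nbhd (n : nat) (E : {set {set 'I_n}}) (v : 'I_n) : {set 'I_n} :=
  [set u | [set u; v] \in E].

Definition in_Gnp (R : realType) (p gam : R) (n : nat) (E : {set {set 'I_n}}) : bool :=
  [forall v : 'I_n,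
     (p * n%:R * (1 - gam) <= #|nbhd E v|%:R) && (#|nbhd E v|%:R <= p * n%:R * (1 + gam))]
  && [forall u : 'I_n, forall v : 'I_n,
     (#|nbhd E u :&: nbhd E v|%:R / #|nbhd E v|%:R >= p * (1 - gam))].

(* Erdos-Renyi G(n,p): each of the 'C(n,2) possible edges present independently
   with probability p; probability of a given graph with edge set E. *)
Definition ER_weight (R : realType) (p : R) (n : nat) (E : {set {set 'I_n}}) : R :=
  p ^+ #|E| * (1 - p) ^+ ('C(n, 2) - #|E|).

Definition ER_prob (R : realType) (p : R) (n : nat) (A : {set {set 'I_n}} -> bool) : R :=
  \sum_(E : {set {set 'I_n}} | is_graph E && A E) ER_weight p E.

From HB Require Import structures.
From mathcomp Require Import all_boot all_order all_algebra.
From mathcomp Require Import all_classical all_reals all_analysis.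
From mathcomp Require Import ring lra.
Set Implicit Arguments.
Unset Strict Implicit.
Unset Printing Implicit Defensive.

Import Order.TTheory GRing.Theory Num.Theory.
Import numFieldNormedType.Exports.
Import mathcomp.boot.fintype mathcomp.boot.finset.
Local Open Scope ring_scope.

(* Union bound over the n^2 pairs (u, v).  The degree of u is a sum over w of the
   independent indicators of the edges {w, u}, and the number of common neighbours
   of u <> v is a sum over w \notin {u, v} of the indicators of the disjoint edge
   pairs {{w, u}, {w, v}}.  The Chernoff bound exp (c - M d^2 / 8) for such sums
   shows that deg u leaves ]pn (1 - g), pn (1 + g/3)[ or codeg (u, v) drops to
   p^2 n (1 - g/2) with probability at most exp (2 - p^2 n g^2 / 72); outside these
   events the graph lies in G_n(p) because (1 - g) (1 + g/3) <= 1 - g/2.  Since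
   n g_n^2 >= (216 / p^2) log n eventually, the n^2 failure probabilities add up to
   O(1/n).  For p = 0 the empty graph has probability 1. *)

Section RandomSubset.
Variables (R : realType) (T : finType) (p : R).
Implicit Types (U S E : {set T}) (f g : {set T} -> R).

Definition Ebern U f : R :=
  \sum_(E : {set T} | E \subset U) p ^+ #|E| * (1 - p) ^+ (#|U| - #|E|) * f E.

Lemma eq_Ebern U f g : (forall E, E \subset U -> f E = g E) -> Ebern U f = Ebern U g.
Proof. by move=> fg; apply: eq_bigr => E /fg ->. Qed.

Lemma EbernD U f g : Ebern U (fun E => f E + g E) = Ebern U f + Ebern U g.
Proof. by rewrite /Ebern -big_split; apply: eq_bigr => E _; rewrite mulrDr. Qed.

Lemma EbernZ U c f : Ebern U (fun E => c * f E) = c * Ebern U f.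
Proof. by rewrite /Ebern mulr_sumr; apply: eq_bigr => E _; rewrite mulrCA. Qed.

Lemma EbernB U f g : Ebern U (fun E => f E - g E) = Ebern U f - Ebern U g.
Proof.
by rewrite -mulN1r -EbernZ -EbernD; apply: eq_Ebern => E _; rewrite mulN1r.
Qed.

Lemma Ebern_sum (I : finType) U (F : I -> {set T} -> R) :
  Ebern U (fun E => \sum_i F i E) = \sum_i Ebern U (F i).
Proof. by rewrite /Ebern; under eq_bigr do rewrite mulr_sumr; rewrite exchange_big. Qed.

Lemma Ebern_set0 f : Ebern set0 f = f set0.
Proof. by rewrite /Ebern (big_pred1 set0) ?cards0 ?mul1r // => E; rewrite subset0. Qed.

Lemma Ebern_split U x f : x \in U ->
  Ebern U f = p * Ebern (U :\ x) (fun E => f (x |: E)) + (1 - p) * Ebern (U :\ x) f.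
Proof.
move=> xU; rewrite /Ebern (bigID (fun E => x \in E)) /= !mulr_sumr.
have cardU : #|U| = #|U :\ x|.+1 by rewrite (cardsD1 x U) xU.
have notin_sub E : E \subset U :\ x -> x \notin E.
  by move=> /subsetP sE; apply/negP => /sE; rewrite !inE eqxx.
congr (_ + _); last first.
  apply: eq_big => [E|E /andP[sE xE]]; first by rewrite subsetD1.
  have le : (#|E| <= #|U :\ x|)%N by apply: subset_leq_card; rewrite subsetD1 sE xE.
  by rewrite cardU subSn // exprS; ring.
rewrite (reindex_onto (fun E => x |: E) (fun E => E :\ x)); last by move=> E /andP[_ /setD1K].
apply: eq_big => [E|E]; last first.
  move=> /andP[_ /eqP EE]; have xE : x \notin E by rewrite -EE setD11.
  by rewrite cardsU1 xE cardU subSS exprS; ring.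
apply/idP/idP => [/andP[/andP[sU _] /eqP <-]|sE]; first exact: setSD.
rewrite setU11 setU1K ?notin_sub // eqxx !andbT subUset sub1set xU.
exact: subset_trans sE (subsetDl _ _).
Qed.

Lemma Ebern_cst U c : Ebern U (fun _ => c) = c.
Proof.
have [n] := ubnP #|U|; elim: n U => // n IH U ltU.
have [->|[x xU]] := set_0Vmem U; first by rewrite Ebern_set0.
rewrite (Ebern_split _ xU) !IH; first ring.
all: by rewrite (cardsD1 x U) xU in ltU.
Qed.

Lemma Ebern_mem U x : Ebern U (fun E => (x \in E)%:R) = (x \in U)%:R * p.
Proof.
have [xU|xU] := boolP (x \in U); last first.
  rewrite mul0r -[RHS](Ebern_cst U); apply: eq_Ebern => E /subsetP sE.
  by case: (boolP (x \in E)) => // /sE; rewrite (negbTE xU).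
rewrite (Ebern_split _ xU) (@eq_Ebern (U :\ x) _ (fun _ => 1)); last first.
  by move=> E; rewrite setU11.
rewrite (@eq_Ebern (U :\ x) (fun E => (x \in E)%:R) (fun _ => 0)); last first.
  by move=> E /subsetP sE; case: (boolP (x \in E)) => // /sE; rewrite setD11.
by rewrite !Ebern_cst mulr1 mulr0 addr0 mul1r.
Qed.

Definition local (V : Type) S (f : {set T} -> V) := forall E, f E = f (E :&: S).

Lemma local_setU1 (V : Type) S (f : {set T} -> V) x E :
  local S f -> x \notin S -> f (x |: E) = f E.
Proof.
move=> fS xS; rewrite fS [RHS]fS; congr f; apply/setP => y; rewrite !inE.
by case: (y =P x) => // ->; rewrite (negbTE xS) !andbF.
Qed.

Lemma local_shift (V : Type) S (f : {set T} -> V) x :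
  local S f -> local S (fun E => f (x |: E)).
Proof.
move=> fS E /=; rewrite fS [RHS]fS; congr f; apply/setP => y; rewrite !inE.
by case: (y \in S); rewrite ?andbT ?andbF.
Qed.

Lemma local_subset (V : Type) S S' (f : {set T} -> V) :
  local S f -> S \subset S' -> local S' f.
Proof. by move=> fS sSS' E; rewrite fS [RHS]fS -setIA (setIidPr sSS'). Qed.

Lemma Ebern_mul U S f g : local S f -> local (~: S) g ->
  Ebern U (fun E => f E * g E) = Ebern U f * Ebern U g.
Proof.
have [n] := ubnP #|U|; elim: n U S f g => // n IH U S f g ltU fS gS.
have [->|[x xU]] := set_0Vmem U; first by rewrite !Ebern_set0.
have ltU' : (#|U :\ x| < n)%N by rewrite (cardsD1 x U) xU in ltU.
(* [x] lies outside the support of one factor, which then ignores [x]. *)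
wlog xS : S f g fS gS / x \notin S => [hwlog|].
  have [xS|] := boolP (x \in S); last exact: hwlog.
  under eq_Ebern do rewrite mulrC; rewrite mulrC.
  by apply: (hwlog (~: S)); rewrite ?setCK ?inE ?xS.
rewrite !(Ebern_split _ xU).
under eq_Ebern do rewrite (local_setU1 _ fS xS).
under [Ebern _ (fun E => f (x |: E))]eq_Ebern do rewrite (local_setU1 _ fS xS).
by rewrite !(IH _ S) //; [ring | exact: local_shift].
Qed.

Lemma Ebern_mem2 U x y : x != y ->
  Ebern U (fun E => ((x \in E) && (y \in E))%:R) = (x \in U)%:R * (y \in U)%:R * p ^+ 2.
Proof.
move=> xy; under eq_Ebern do rewrite -mulnb natrM.
rewrite (@Ebern_mul U [set x]) => [|E|E]; last 2 first.
- by rewrite !inE eqxx andbT.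
- by rewrite !inE eq_sym (negbTE xy) andbT.
by rewrite !Ebern_mem expr2 mulrACA.
Qed.

Lemma Ebern_prod (I : eqType) (s : seq I) U (S : I -> {set T}) (h : I -> {set T} -> R) :
  uniq s -> (forall i, local (S i) (h i)) ->
  (forall i j, i != j -> [disjoint S i & S j]) ->
  Ebern U (fun E => \prod_(i <- s) h i E) = \prod_(i <- s) Ebern U (h i).
Proof.
move=> + hS dS; elim: s => [_|i s IH /= /andP[si us]].
  by rewrite big_nil -[RHS](Ebern_cst U); apply: eq_Ebern => E _; rewrite big_nil.
under eq_Ebern do rewrite big_cons.
rewrite big_cons (Ebern_mul _ (hS i)) ?IH // => E.
apply: eq_big_seq => j js; rewrite (local_subset (hS j) (_ : S j \subset ~: S i)) //.
by rewrite -disjoints_subset dS //; apply: contraNneq si => <-.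
Qed.

Lemma Ebern_p0 U f : p = 0 -> Ebern U f = f set0.
Proof.
move=> p0; rewrite /Ebern p0 (bigD1 set0) ?sub0set //= big1 => [|E /andP[_ nE]].
  by rewrite cards0 expr0 subn0 subr0 expr1n !mul1r addr0.
by rewrite expr0n cards_eq0 (negbTE nE) !mul0r.
Qed.

Hypothesis p01 : 0 <= p <= 1.

Lemma ler_Ebern U f g : (forall E, E \subset U -> f E <= g E) -> Ebern U f <= Ebern U g.
Proof.
move=> fg; apply: ler_sum => E /fg; apply: ler_wpM2l.
by case/andP: p01 => p0 p1; rewrite mulr_ge0 // exprn_ge0 // subr_ge0.
Qed.

Lemma Ebern_ge0 U f : (forall E, E \subset U -> 0 <= f E) -> 0 <= Ebern U f.
Proof. by move=> f0; rewrite -(Ebern_cst U 0); apply: ler_Ebern. Qed.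

Lemma Ebern_union_bound (I : finType) U (B : I -> {set T} -> bool) (G : {set T} -> bool) :
  (forall E, E \subset U -> (forall i, ~~ B i E) -> G E) ->
  1 - \sum_i Ebern U (fun E => (B i E)%:R) <= Ebern U (fun E => (G E)%:R).
Proof.
move=> good; rewrite -Ebern_sum -[X in X - _](Ebern_cst U 1) -EbernB.
apply: ler_Ebern => E EU.
have sum_ge0 : 0 <= \sum_i (B i E)%:R :> R by rewrite sumr_ge0.
have [/existsP[i Bi]|/existsPn noB] := boolP [exists i, B i E]; last first.
  by rewrite good // lerBlDr lerDl.
apply: le_trans (ler0n _ _); rewrite subr_le0 (bigD1 i) //= Bi lerDl.
by rewrite sumr_ge0.
Qed.

Lemma Ebern_or U (a b : {set T} -> bool) :
  Ebern U (fun E => (a E || b E)%:R)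
    <= Ebern U (fun E => (a E)%:R) + Ebern U (fun E => (b E)%:R).
Proof.
rewrite -EbernD; apply: ler_Ebern => E _.
by rewrite -natrD ler_nat; case: (a E); case: (b E).
Qed.

Lemma Ebern_exp_markov U (Y : {set T} -> R) (a l : R) : 0 <= l ->
  Ebern U (fun E => (a <= Y E)%R%:R) <= expR (- (l * a)) * Ebern U (fun E => expR (l * Y E)).
Proof.
move=> l0; rewrite -EbernZ; apply: ler_Ebern => E _; rewrite -expRD.
have [aY|_] := boolP (a <= Y E); last exact: expR_ge0.
apply: le_trans (expR_ge1Dx _); rewrite lerDl -mulrN -mulrDr.
by rewrite mulr_ge0 // addrC subr_ge0.
Qed.
End RandomSubset.

Lemma expR_le_quadratic (R : realType) (l : R) : l <= 2^-1 -> expR l <= 1 + l + 2 * l ^+ 2.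
Proof.
move=> l_le; set q := 1 + l + 2 * l ^+ 2.
have e0 := expR_gt0 l.
have ediv : expR l * (1 - l) <= 1.
  rewrite -[leRHS](mulfV (lt0r_neq0 e0)) ler_wpM2l ?expR_ge0 // -expRN.
  exact: expR_ge1Dx.
have poly : 1 <= (1 - l) * q by rewrite /q; nra.
have q0 : 0 <= q by rewrite /q; nra.
apply: (le_trans (y := expR l * ((1 - l) * q))).
  by rewrite ler_peMr // ltW.
by rewrite mulrA ler_piMl.
Qed.

Section Chernoff.
Variables (R : realType) (T : finType) (p : R) (U : {set T}).
Hypothesis p01 : 0 <= p <= 1.
Variables (I : finType) (A : I -> {set T} -> bool) (S : I -> {set T}).
Hypothesis A_local : forall i, local (S i) (A i).
Hypothesis S_disjoint : forall i j, i != j -> [disjoint S i & S j].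

Local Notation X E := (\sum_i (A i E)%:R).
Local Notation mu := (\sum_i Ebern p U (fun E => (A i E)%:R)).

Lemma Ebern_expR_sum l : Ebern p U (fun E => expR (l * X E)) <= expR ((expR l - 1) * mu).
Proof.
rewrite mulr_sumr expR_sum.
have indicator_expR i E : expR (l * (A i E)%:R) = 1 + (expR l - 1) * (A i E)%:R.
  by case: (A i E); rewrite ?mulr1 ?mulr0 ?expR0 ?addr0 // addrC subrK.
under eq_Ebern do rewrite mulr_sumr expR_sum.
under eq_Ebern do under eq_bigr do rewrite indicator_expR.
have h_local i : local (S i) (fun E => 1 + (expR l - 1) * (A i E)%:R).
  by move=> E; rewrite A_local.
rewrite (Ebern_prod p U (index_enum_uniq I) h_local S_disjoint).
apply: ler_prod => i _; rewrite Ebern_ge0 //= => [|E _]; last first.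
  by rewrite -indicator_expR expR_ge0.
by rewrite EbernD Ebern_cst EbernZ expR_ge1Dx.
Qed.

Lemma mean_ge0 : 0 <= mu.
Proof. by apply: sumr_ge0 => i _; apply: Ebern_ge0 => // E _; exact: ler0n. Qed.

Lemma chernoff_upper M d : mu <= M -> 0 <= d <= 1 ->
  Ebern p U (fun E => (M * (1 + d) <= X E)%R%:R) <= expR (- (M * d ^+ 2 / 8)).
Proof.
move=> muM /andP[d0 d1].
(* [l = d / 4] minimises the exponent [- l M d + 2 l^2 M]. *)
set l := d / 4.
have l0 : 0 <= l by rewrite /l; lra.
apply: le_trans (Ebern_exp_markov p01 U (fun E => X E) (M * (1 + d)) l0) _.
apply: le_trans (ler_wpM2l (expR_ge0 _) (Ebern_expR_sum l)) _.
rewrite -expRD ler_expR.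
have quad : expR l - 1 <= l + 2 * l ^+ 2.
  by rewrite lerBlDl addrA expR_le_quadratic // /l; lra.
have mgf : (expR l - 1) * mu <= (l + 2 * l ^+ 2) * M.
  have := mean_ge0; have : 0 <= l + 2 * l ^+ 2 by nra.
  nra.
suff -> : - (M * d ^+ 2 / 8) = - (l * (M * (1 + d))) + (l + 2 * l ^+ 2) * M by lra.
by rewrite /l; field.
Qed.

Lemma chernoff_lower M c d : M - c <= mu -> 0 <= c -> 0 <= d <= 1 ->
  Ebern p U (fun E => (X E <= M * (1 - d))%R%:R) <= expR (c - M * d ^+ 2 / 8).
Proof.
move=> muM c0 /andP[d0 d1]; set l := d / 4.
have l0 : 0 <= l by rewrite /l; lra.
under eq_Ebern do rewrite -lerN2.
apply: le_trans (Ebern_exp_markov p01 U (fun E => - X E) (- (M * (1 - d))) l0) _.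
under eq_Ebern do rewrite mulrN -mulNr.
apply: le_trans (ler_wpM2l (expR_ge0 _) (Ebern_expR_sum (- l))) _.
rewrite -expRD ler_expR.
have quad : expR (- l) - 1 <= - l + 2 * l ^+ 2.
  by rewrite lerBlDl addrA -sqrrN expR_le_quadratic // /l; lra.
have mgf : (expR (- l) - 1) * mu <= (- l + 2 * l ^+ 2) * (M - c).
  have := mean_ge0; have : - l + 2 * l ^+ 2 <= 0 by rewrite /l; nra.
  nra.
have small : c * (l - 2 * l ^+ 2) <= c by rewrite /l; nra.
have key : - (l * - (M * (1 - d))) + (- l + 2 * l ^+ 2) * (M - c)
    = - (M * d ^+ 2 / 8) + c * (l - 2 * l ^+ 2) by rewrite /l; field.
lra.
Qed.

End Chernoff.

Lemma set2_neq (T : finType) (a b c d : T) : a != b -> a != d -> [set a; c] != [set b; d].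
Proof.
move=> ab ad; apply: contraNneq ad => abcd.
by have := set21 a c; rewrite abcd !inE (negbTE ab).
Qed.

Lemma ER_prob_Ebern (R : realType) (p : R) n (A : {set {set 'I_n}} -> bool) :
  ER_prob p A = Ebern p (two_sets n) (fun E => (A E)%:R).
Proof.
rewrite /ER_prob /ER_weight /Ebern /is_graph big_mkcondr.
have -> : 'C(n, 2) = #|two_sets n| by rewrite card_draws card_ord.
apply: eq_bigr => E _.
by case: (A E); rewrite ?mulr1 ?mulr0.
Qed.

Section Neighbourhoods.
Variables (R : realType) (n : nat) (p : R).
Local Notation U := (two_sets n).
Implicit Types (E : {set {set 'I_n}}) (u v w : 'I_n).

Lemma pair_in_two_sets u v : ([set u; v] \in U) = (u != v).
Proof. by rewrite /two_sets inE cards2; case: (u != v). Qed.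

Lemma sum_notin (A : {set 'I_n}) (c : R) :
  \sum_w (w \notin A)%:R * c = (n%:R - #|A|%:R) * c.
Proof.
have cardC : #|~: A|%:R = n%:R - #|A|%:R :> R.
  have e : (#|A| + #|~: A|)%:R = n%:R :> R by rewrite cardsC card_ord.
  by rewrite -e natrD addrAC subrr add0r.
rewrite -cardC mulr_natl -sumr_const [RHS]big_mkcond; apply: eq_bigr => w _.
by rewrite inE; case: (w \in A); rewrite ?mul1r ?mul0r.
Qed.

Lemma card_nbhd E v : #|nbhd E v|%:R = \sum_w ([set w; v] \in E)%:R :> R.
Proof.
rewrite -sum1_card natr_sum big_mkcond /=; apply: eq_bigr => w _.
by rewrite /nbhd inE; case: ([set w; v] \in E).
Qed.

Lemma edge_local v w : local [set [set w; v]] (fun E => [set w; v] \in E).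
Proof. by move=> E; rewrite !inE eqxx andbT. Qed.

Lemma edge_disjoint v w1 w2 : w1 != w2 -> [disjoint [set [set w1; v]] & [set [set w2; v]]].
Proof.
move=> w12; rewrite disjoints1 inE.
have [w1v|w1v] := eqVneq w1 v; last exact: set2_neq.
have w21 : w2 != w1 by rewrite eq_sym.
by rewrite eq_sym set2_neq // -w1v.
Qed.

Lemma mean_degree v : \sum_w Ebern p U (fun E => ([set w; v] \in E)%:R) = (n%:R - 1) * p.
Proof.
under eq_bigr do rewrite Ebern_mem pair_in_two_sets -in_set1.
by rewrite sum_notin cards1.
Qed.

(* [w] in [{u, v}] is excluded to make the supports of distinct [w] disjoint; such a
   [w] never counts anyway, as a graph has no loops. *)
Definition common_nbr u v w E :=
  [&& w \notin [set u; v], [set w; u] \in E & [set w; v] \in E].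

Definition common_nbr_support u v w : {set {set 'I_n}} :=
  if w \in [set u; v] then set0 else [set [set w; u]; [set w; v]].

Lemma card_common_nbhd E u v : E \subset U ->
  #|nbhd E u :&: nbhd E v|%:R = \sum_w (common_nbr u v w E)%:R :> R.
Proof.
move=> /subsetP EU; rewrite -sum1_card natr_sum big_mkcond /=; apply: eq_bigr => w _.
rewrite /common_nbr /nbhd !inE.
have loop x : [set x; x] \in E = false.
  by apply: contraTF isT => /EU; rewrite pair_in_two_sets eqxx.
have [->|wu] := eqVneq w u; first by rewrite loop.
have [->|wv] := eqVneq w v; first by rewrite loop andbF.
by case: (_ && _).
Qed.

Lemma common_nbr_local u v w : local (common_nbr_support u v w) (common_nbr u v w).
Proof.
move=> E; rewrite /common_nbr /common_nbr_support.
by case: (w \in [set u; v]) => //=; rewrite !inE !eqxx !orbT !andbT.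
Qed.

Lemma common_nbr_disjoint u v w1 w2 : w1 != w2 ->
  [disjoint common_nbr_support u v w1 & common_nbr_support u v w2].
Proof.
move=> w12; rewrite /common_nbr_support -setI_eq0.
case: ifP => [_|/negbT]; first by rewrite set0I.
rewrite !inE => /norP[w1u w1v]; case: ifP => _; first by rewrite setI0.
apply/eqP/setP => e; rewrite !inE; apply/negP.
by case/andP=> /orP[]/eqP-> /orP[]/eqP; apply/eqP; apply: set2_neq.
Qed.

Lemma mean_common_nbr u v : u != v ->
  \sum_w Ebern p U (fun E => (common_nbr u v w E)%:R) = (n%:R - 2) * p ^+ 2.
Proof.
move=> uv.
have mean_w w :
    Ebern p U (fun E => (common_nbr u v w E)%:R) = (w \notin [set u; v])%:R * p ^+ 2.
  have [wuv|wuv] := boolP (w \in [set u; v]).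
    by rewrite mul0r -(Ebern_cst p U 0); apply: eq_Ebern => E _; rewrite /common_nbr wuv.
  move: (wuv); rewrite !inE => /norP[wu wv]; rewrite /common_nbr wuv /=.
  rewrite Ebern_mem2 ?pair_in_two_sets ?wu ?wv ?mul1r //.
  by rewrite setUC set2_neq // eq_sym.
under eq_bigr do rewrite mean_w.
by rewrite sum_notin cards2 uv.
Qed.
End Neighbourhoods.

Section TypicalGraphs.
Variables (R : realType) (n : nat) (p g : R).
Hypothesis p01 : 0 <= p <= 1.
Hypothesis g01 : 0 <= g <= 1.
Local Notation U := (two_sets n).
Implicit Types (E : {set {set 'I_n}}) (u v w : 'I_n).

Let tail_bound := expR (2 - p ^+ 2 / 72 * n%:R * g ^+ 2).

Definition atypical_pair u v E : bool :=
  [|| #|nbhd E u|%:R <= p * n%:R * (1 - g),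
      p * n%:R * (1 + g / 3) <= #|nbhd E u|%:R
    | (u != v) && (#|nbhd E u :&: nbhd E v|%:R <= p ^+ 2 * n%:R * (1 - g / 2))].

Lemma in_Gnp_of_typical E : (forall u v, ~~ atypical_pair u v E) -> in_Gnp p g E.
Proof.
move=> typical; case/andP: p01 => p0 p1; case/andP: g01 => g0 g1.
have deg_bounds v : p * n%:R * (1 - g) < #|nbhd E v|%:R < p * n%:R * (1 + g / 3).
  by have := typical v v; rewrite /atypical_pair !negb_or -!ltNge => /and3P[-> -> _].
(* Needed because the ratio in [in_Gnp] is 0 for an empty neighbourhood. *)
have deg_gt0 v : 0 < #|nbhd E v|%:R :> R.
  case/andP: (deg_bounds v) => + _; apply: le_lt_trans.
  by rewrite mulr_ge0 ?mulr_ge0 ?subr_ge0.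
apply/andP; split; apply/forallP => u.
  case/andP: (deg_bounds u) => lo hi; rewrite ltW //=.
  apply: ltW; apply: lt_le_trans hi _; rewrite ler_wpM2l ?mulr_ge0 //; lra.
apply/forallP => v; rewrite ler_pdivlMr ?deg_gt0 //.
have [->|uv] := eqVneq u v.
  by rewrite setIid ler_piMl ?(ltW (deg_gt0 v)) //; nra.
have codeg_lo : p ^+ 2 * n%:R * (1 - g / 2) < #|nbhd E u :&: nbhd E v|%:R.
  by have := typical u v; rewrite /atypical_pair uv /= !negb_or ltNge => /and3P[_ _].
apply: ltW; apply: le_lt_trans codeg_lo.
case/andP: (deg_bounds v) => _ /ltW hi.
apply: le_trans (ler_wpM2l (_ : 0 <= p * (1 - g)) hi) _; first by rewrite mulr_ge0 ?subr_ge0.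
have -> : p * (1 - g) * (p * n%:R * (1 + g / 3)) = p ^+ 2 * n%:R * ((1 - g) * (1 + g / 3)).
  by ring.
by rewrite ler_wpM2l ?mulr_ge0 ?sqr_ge0 //; nra.
Qed.

Let ng2_ge0 : 0 <= n%:R * g ^+ 2 :> R.
Proof. by rewrite mulr_ge0 ?sqr_ge0. Qed.

Let expR_le_tail_bound c K :
  c <= 2 -> p ^+ 2 * (n%:R * g ^+ 2) / 72 <= K -> expR (c - K) <= tail_bound.
Proof. by move=> c2 K_ge; rewrite ler_expR; lra. Qed.

Let psq_ng2_le : p ^+ 2 * (n%:R * g ^+ 2) <= p * (n%:R * g ^+ 2).
Proof. by case/andP: p01 => p0 p1; rewrite ler_wpM2r // expr2 ler_piMl. Qed.

Lemma Ebern_degree_low v :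
  Ebern p U (fun E => (#|nbhd E v|%:R <= p * n%:R * (1 - g))%R%:R) <= tail_bound.
Proof.
case/andP: p01 => p0 p1; under eq_Ebern do rewrite card_nbhd.
have mean : p * n%:R - p <= \sum_w Ebern p U (fun E => ([set w; v] \in E)%:R).
  by rewrite mean_degree mulrBl mul1r mulrC.
apply: le_trans (chernoff_lower p01 (@edge_local n v) (@edge_disjoint n v) mean p0 g01) _.
apply: expR_le_tail_bound; first lra.
have := psq_ng2_le; have := mulr_ge0 p0 ng2_ge0; lra.
Qed.

Lemma Ebern_degree_high v :
  Ebern p U (fun E => (p * n%:R * (1 + g / 3) <= #|nbhd E v|%:R)%R%:R) <= tail_bound.
Proof.
case/andP: p01 => p0 p1; case/andP: g01 => g0 g1.
under eq_Ebern do rewrite card_nbhd.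
have mean : \sum_w Ebern p U (fun E => ([set w; v] \in E)%:R) <= p * n%:R.
  by rewrite mean_degree mulrBl mul1r mulrC lerBlDr lerDl.
have g3 : 0 <= g / 3 <= 1 by apply/andP; split; lra.
apply: le_trans (chernoff_upper p01 (@edge_local n v) (@edge_disjoint n v) mean g3) _.
rewrite -sub0r; apply: expR_le_tail_bound => //.
have := psq_ng2_le; have := mulr_ge0 p0 ng2_ge0; lra.
Qed.

Lemma Ebern_codegree_low u v :
  Ebern p U (fun E => ((u != v) &&
    (#|nbhd E u :&: nbhd E v|%:R <= p ^+ 2 * n%:R * (1 - g / 2)))%:R) <= tail_bound.
Proof.
have [<-|uv] := eqVneq u v; first by rewrite Ebern_cst expR_ge0.
case/andP: p01 => p0 p1; case/andP: g01 => g0 g1.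
under eq_Ebern => E EU do rewrite card_common_nbhd //.
have mean : p ^+ 2 * n%:R - 2 * p ^+ 2 <= \sum_w Ebern p U (fun E => (common_nbr u v w E)%:R).
  by rewrite mean_common_nbr // mulrBl mulrC.
have g2 : 0 <= g / 2 <= 1 by apply/andP; split; lra.
have c0 : 0 <= 2 * p ^+ 2 by rewrite mulr_ge0 ?sqr_ge0.
apply: le_trans (chernoff_lower p01 (@common_nbr_local n u v) (@common_nbr_disjoint n u v)
  mean c0 g2) _.
apply: expR_le_tail_bound; first by rewrite expr2; nra.
have := mulr_ge0 (sqr_ge0 p) ng2_ge0; lra.
Qed.

Lemma Ebern_atypical_pair u v :
  Ebern p U (fun E => (atypical_pair u v E)%:R) <= 3 * tail_bound.
Proof.
rewrite /atypical_pair; apply: le_trans (Ebern_or p01 U _ _) _.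
rewrite (mulrDl 1 2) mul1r.
apply: lerD; first exact: Ebern_degree_low.
apply: le_trans (Ebern_or p01 U _ _) _; rewrite (mulrDl 1 1) mul1r.
by apply: lerD; [exact: Ebern_degree_high | exact: Ebern_codegree_low].
Qed.

Lemma ER_prob_in_Gnp_ge : 1 - 3 * n%:R ^+ 2 * tail_bound <= ER_prob p (@in_Gnp R p g n).
Proof.
have typical E : E \subset U ->
    (forall uv : 'I_n * 'I_n, ~~ atypical_pair uv.1 uv.2 E) -> in_Gnp p g E.
  by move=> _ typ; apply: in_Gnp_of_typical => u v; exact: (typ (u, v)).
rewrite ER_prob_Ebern; apply: le_trans (Ebern_union_bound p01 typical).
rewrite lerD2l lerN2.
apply: le_trans (ler_sum _ (fun uv _ => Ebern_atypical_pair uv.1 uv.2)) _.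
rewrite sumr_const card_prod card_ord.
by rewrite -[_ *+ (n * n)]mulr_natr natrM -expr2 mulrAC.
Qed.

End TypicalGraphs.

Local Open Scope classical_set_scope.
Local Open Scope ring_scope.

Lemma near_log_le_sq (R : realType) (gamma : nat -> R) (K : R) : 0 <= K ->
  (fun n : nat => gamma n / Num.sqrt (ln (n%:R : R) / n%:R)) @ \oo --> +oo ->
  \forall n \near \oo, K * ln n%:R <= n%:R * gamma n ^+ 2.
Proof.
move=> K0 /cvgryPge/(_ (Num.sqrt K)) rate; near=> n.
have n2 : (2 <= n)%N by near: n; exact: nbhs_infty_ge.
have n0 : 0 < n%:R :> R by rewrite ltr0n (leq_trans _ n2).
have ln0 : 0 < ln n%:R :> R by rewrite ln_gt0 // ltr1n.
have s0 : 0 < Num.sqrt (ln n%:R / n%:R) :> R by rewrite sqrtr_gt0 divr_gt0.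
have : Num.sqrt K * Num.sqrt (ln n%:R / n%:R) <= gamma n.
  by rewrite -ler_pdivlMr //; near: n.
rewrite -sqrtrM // => le_gamma.
have := lerXn2r 2 (sqrtr_ge0 _) (le_trans (sqrtr_ge0 _) le_gamma) le_gamma.
rewrite sqr_sqrtr; last by rewrite mulr_ge0 // divr_ge0 // ltW.
by rewrite mulrA ler_pdivrMr // [n%:R * _]mulrC.
Unshelve. all: end_near.
Qed.

Lemma union_tail_cvg0 (R : realType) (p : R) (gamma : nat -> R) : 0 < p ->
  (fun n : nat => gamma n / Num.sqrt (ln (n%:R : R) / n%:R)) @ \oo --> +oo ->
  (fun n : nat => 3 * n%:R ^+ 2 * expR (2 - p ^+ 2 / 72 * n%:R * gamma n ^+ 2)) @ \oo --> 0.
Proof.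
move=> p0 rate.
have K0 : 0 <= 216 / p ^+ 2 by rewrite divr_ge0 ?sqr_ge0.
have harmonic_cvg0 : (fun n => 6 * expR 2 * harmonic n) @ \oo --> (0 : R).
  by rewrite -(mulr0 (6 * expR 2)); apply: cvgM; [exact: cvg_cst | exact: cvg_harmonic].
apply: (squeeze_cvgr _ (cvg_cst 0) harmonic_cvg0); near=> n.
have n1 : (1 <= n)%N by near: n; exact: nbhs_infty_ge.
have logb : 216 / p ^+ 2 * ln n%:R <= n%:R * gamma n ^+ 2.
  by near: n; exact: near_log_le_sq.
rewrite /harmonic /=; set N : R := n%:R in logb *.
have N0 : 0 < N by rewrite ltr0n.
have tail_le : expR (2 - p ^+ 2 / 72 * N * gamma n ^+ 2) <= expR 2 / N ^+ 3.
  rewrite -[N in N ^+ 3](lnK (_ : N \is Num.pos)) ?posrE //.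
  rewrite -expRM_natl -expRN -expRD ler_expR lerD2l lerN2.
  have -> : 3%:R * ln N = p ^+ 2 / 72 * (216 / p ^+ 2 * ln N).
    by field; rewrite gt_eqF.
  by rewrite -[_ * N * _]mulrA ler_wpM2l // divr_ge0 ?sqr_ge0.
rewrite mulr_ge0 ?mulr_ge0 ?sqr_ge0 ?expR_ge0 //=.
apply: le_trans (ler_wpM2l _ tail_le) _; first by rewrite mulr_ge0 ?sqr_ge0.
have N1 : n.+1%:R = N + 1 :> R by rewrite -natr1.
rewrite N1 ler_pdivlMr ?ltr_wpDl //.
have -> : 3 * N ^+ 2 * (expR 2 / N ^+ 3) * (N + 1) = 3 * expR 2 * (1 + N^-1).
  by field; rewrite gt_eqF.
have : N^-1 <= 1 by rewrite invf_le1 // ler1n.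
have := expR_gt0 (2 : R); nra.
Unshelve. all: end_near.
Qed.

Lemma ER_prob_in_Gnp_p0 (R : realType) (g : R) n : ER_prob (0 : R) (@in_Gnp R 0 g n) = 1.
Proof.
rewrite ER_prob_Ebern Ebern_p0 //.
have nbhd0 v : nbhd (set0 : {set {set 'I_n}}) v = set0 by apply/setP => u; rewrite !inE.
rewrite /in_Gnp; apply/eqP; rewrite pnatr_eq1 eqb1; apply/andP; split.
  by apply/forallP => v; rewrite nbhd0 cards0 !mul0r lexx.
by apply/forallP => u; apply/forallP => v; rewrite nbhd0 set0I cards0 !mul0r lexx.
Qed.

Theorem lemma1 (R : realType) (p : R) (gamma : nat -> R)
  (hp : 0 <= p <= 1)
  (hgam : forall n, 0 <= gamma n <= 2^-1)
  (hgam_rate : (fun n : nat => gamma n / Num.sqrt (ln (n%:R : R) / n%:R)) @ \oo --> +oo)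
  (hgam0 : gamma @ \oo --> 0) :
  exists theta : nat -> R, theta @ \oo --> 0 /\
    forall n : nat, ER_prob p (@in_Gnp R p (gamma n) n) >= 1 - theta n.
Proof.
have [->|p_neq0] := eqVneq p 0.
  by exists (fun=> 0); split=> [|n]; [exact: cvg_cst | rewrite ER_prob_in_Gnp_p0 subr0].
have p_gt0 : 0 < p by rewrite lt_def p_neq0; case/andP: hp.
exists (fun n => 3 * n%:R ^+ 2 * expR (2 - p ^+ 2 / 72 * n%:R * gamma n ^+ 2)).
split; first exact: union_tail_cvg0.
move=> n; apply: ER_prob_in_Gnp_ge => //.
by case/andP: (hgam n) => g0 g1; rewrite g0 (le_trans g1) // invf_le1 // ler1n.
Qed.
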